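(* Let $c,N,n,n_1,n_2\in\mathbb{R}$, $D=\{\vec\gamma\in\mathbb{R}^3:\gamma_1^2+\gamma_2^2>0\}$, $\rho=\sqrt{\gamma_1^2+\gamma_2^2}$, and define $\vec\mu$ on $D$ by $$\mu_1=c\Big(-n\gamma_1-n_1\gamma_1^2+2n_1\gamma_2^2+n_1\gamma_3^2-3n_2\gamma_1\gamma_2+\frac{N\gamma_1}{\rho^{3}}\Big),\quad \mu_2=c\Big(-n\gamma_2+2n_2\gamma_1^2-n_2\gamma_2^2+n_2\gamma_3^2-3n_1\gamma_1\gamma_2+\frac{N\gamma_2}{\rho^{3}}\Big),$$ $$\mu_3=-c\gamma_3\Big(3n+5n_1\gamma_1+5n_2\gamma_2+\frac{N\gamma_3}{\rho}\Big).$$ Then $\Pi_{\vec\mu}$ defines a Poisson bracket on $\mathbb{R}^3\times D$, and $$C(\vec M,\vec\gamma)=\vec M\cdot\vec\gamma+c(n+n_1\gamma_1+n_2\gamma_2)(2\gamma_1^2+2\gamma_2^2+\gamma_3^2)+\tfrac12cN\Big(\frac{\gamma_3\rho^2-2}{\rho}-|\vec\gamma|^2\arctan\frac{\gamma_3}{\rho}\Big)$$ is a Casimir function of $\Pi_{\vec\mu}$.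
   Context: Coordinates on $\mathbb{R}^6$ are $(\vec M,\vec\gamma)=(M_1,M_2,M_3,\gamma_1,\gamma_2,\gamma_3)$. For a smooth $\vec\mu=(\mu_1,\mu_2,\mu_3)$ of $(\vec M,\vec\gamma)$, $\Pi_{\vec\mu}$ is the skew-symmetric $6\times6$ matrix $$\Pi_{\vec\mu}=\begin{bmatrix}0&-M_3-\mu_3&M_2+\mu_2&0&-\gamma_3&\gamma_2\\ M_3+\mu_3&0&-M_1-\mu_1&\gamma_3&0&-\gamma_1\\ -M_2-\mu_2&M_1+\mu_1&0&-\gamma_2&\gamma_1&0\\ 0&-\gamma_3&\gamma_2&0&0&0\\ \gamma_3&0&-\gamma_1&0&0&0\\ -\gamma_2&\gamma_1&0&0&0&0\end{bmatrix},$$ it ''defines a Poisson bracket'' if $\{f,g\}_{\vec\mu}=(\nabla f)^T\Pi_{\vec\mu}\nabla g$ satisfies the Jacobi identity, and a Casimir function is a smooth $C$ with $\Pi_{\vec\mu}\nabla C=0$. *)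

From Stdlib Require Import Reals Lra ClassicalEpsilon.
Open Scope R_scope.

(* Points of R^6 = (M1,M2,M3,g1,g2,g3) are encoded as x : nat -> R with
   x 0 = M1, x 1 = M2, x 2 = M3, x 3 = g1, x 4 = g2, x 5 = g3;
   coordinates >= 6 are inert (never perturbed). *)
Definition pt := nat -> R.

Definition upd (x : pt) (i : nat) (t : R) : pt :=
  fun j => if Nat.eqb j i then t else x j.

Definition has_pd (i : nat) (f : pt -> R) (x : pt) : Prop :=
  exists l, derivable_pt_lim (fun t => f (upd x i t)) (x i) l.

Definition pd (i : nat) (f : pt -> R) (x : pt) : R :=
  epsilon (inhabits 0) (fun l => derivable_pt_lim (fun t => f (upd x i t)) (x i) l).

Definition cont_at (f : pt -> R) (x : pt) : Prop :=
  forall eps, 0 < eps -> exists d, 0 < d /\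
    forall y : pt, (forall i, (i < 6)%nat -> Rabs (y i - x i) < d) ->
      (forall i, (6 <= i)%nat -> y i = x i) -> Rabs (f y - f x) < eps.

Fixpoint Ck (U : pt -> Prop) (k : nat) (f : pt -> R) : Prop :=
  match k with
  | O => forall x, U x -> cont_at f x
  | S k' => (forall x, U x -> cont_at f x) /\
            forall i, (i < 6)%nat ->
              (forall x, U x -> has_pd i f x) /\ Ck U k' (pd i f)
  end.

Definition smooth_on (U : pt -> Prop) (f : pt -> R) : Prop := forall k, Ck U k f.

Definition Pi (mu1 mu2 mu3 : pt -> R) (x : pt) (i j : nat) : R :=
  let M1 := x 0%nat in let M2 := x 1%nat in let M3 := x 2%nat in
  let g1 := x 3%nat in let g2 := x 4%nat in let g3 := x 5%nat in
  match (i, j) with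
  | (0, 1)%nat => - M3 - mu3 x | (0, 2)%nat => M2 + mu2 x
  | (0, 4)%nat => - g3 | (0, 5)%nat => g2
  | (1, 0)%nat => M3 + mu3 x | (1, 2)%nat => - M1 - mu1 x
  | (1, 3)%nat => g3 | (1, 5)%nat => - g1
  | (2, 0)%nat => - M2 - mu2 x | (2, 1)%nat => M1 + mu1 x
  | (2, 3)%nat => - g2 | (2, 4)%nat => g1
  | (3, 1)%nat => - g3 | (3, 2)%nat => g2
  | (4, 0)%nat => g3 | (4, 2)%nat => - g1
  | (5, 0)%nat => - g2 | (5, 1)%nat => g1
  | _ => 0
  end.

Definition bracket (P : pt -> nat -> nat -> R) (f g : pt -> R) (x : pt) : R :=
  sum_f_R0 (fun i => sum_f_R0 (fun j => pd i f x * P x i j * pd j g x) 5) 5.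

Definition Poisson_on (U : pt -> Prop) (P : pt -> nat -> nat -> R) : Prop :=
  forall f g h, smooth_on U f -> smooth_on U g -> smooth_on U h ->
    forall x, U x ->
      bracket P f (bracket P g h) x + bracket P g (bracket P h f) x
      + bracket P h (bracket P f g) x = 0.

Definition Casimir_on (U : pt -> Prop) (P : pt -> nat -> nat -> R) (C : pt -> R) : Prop :=
  smooth_on U C /\
  forall x, U x -> forall i, (i < 6)%nat ->
    sum_f_R0 (fun j => P x i j * pd j C x) 5 = 0.

Definition Dom (x : pt) : Prop := x 3%nat ^ 2 + x 4%nat ^ 2 > 0.

Definition rho (x : pt) : R := sqrt (x 3%nat ^ 2 + x 4%nat ^ 2).

Definition mu1 (c N n n1 n2 : R) (x : pt) : R :=
  let g1 := x 3%nat in let g2 := x 4%nat in let g3 := x 5%nat in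
  c * (- n * g1 - n1 * g1 ^ 2 + 2 * n1 * g2 ^ 2 + n1 * g3 ^ 2 - 3 * n2 * g1 * g2
       + N * g1 / rho x ^ 3).

Definition mu2 (c N n n1 n2 : R) (x : pt) : R :=
  let g1 := x 3%nat in let g2 := x 4%nat in let g3 := x 5%nat in
  c * (- n * g2 + 2 * n2 * g1 ^ 2 - n2 * g2 ^ 2 + n2 * g3 ^ 2 - 3 * n1 * g1 * g2
       + N * g2 / rho x ^ 3).

Definition mu3 (c N n n1 n2 : R) (x : pt) : R :=
  let g1 := x 3%nat in let g2 := x 4%nat in let g3 := x 5%nat in
  - c * g3 * (3 * n + 5 * n1 * g1 + 5 * n2 * g2 + N * g3 / rho x).

Definition Cas (c N n n1 n2 : R) (x : pt) : R :=
  let M1 := x 0%nat in let M2 := x 1%nat in let M3 := x 2%nat in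
  let g1 := x 3%nat in let g2 := x 4%nat in let g3 := x 5%nat in
  M1 * g1 + M2 * g2 + M3 * g3
  + c * (n + n1 * g1 + n2 * g2) * (2 * g1 ^ 2 + 2 * g2 ^ 2 + g3 ^ 2)
  + / 2 * c * N * ((g3 * rho x ^ 2 - 2) / rho x
                   - (g1 ^ 2 + g2 ^ 2 + g3 ^ 2) * atan (g3 / rho x)).

(* Every entry of [Pi] and [C] is an elementary expression (polynomials, quotients,
   [sqrt], [atan]) in the coordinates that is well defined on R^3 x D, and a symbolic
   derivative shows such expressions to be smooth there.  For a skew-symmetric matrix of
   smooth functions, the terms of the Jacobi sum containing second derivatives of the three
   functions cancel in pairs by the symmetry of mixed partials (Schwarz), leaving
   [sum a_k b_i c_j J_kij] with [J_kij = sum_l (Pi_kl d_l Pi_ij + Pi_il d_l Pi_jk + Pi_jl d_l Pi_ki)].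
   [J] is totally antisymmetric, so only the triples [k < i < j] need to be checked; each of
   these, like [Pi grad C = 0], is a rational identity in the coordinates and [rho]. *)

From Stdlib Require Import Reals Lra Lia FunctionalExtensionality ClassicalEpsilon.
Open Scope R_scope.

(** * Coordinate updates and partial derivatives *)

Lemma upd_eq (x : pt) i t : upd x i t i = t.
Proof. unfold upd. now rewrite Nat.eqb_refl. Qed.

Lemma upd_neq (x : pt) i t m : m <> i -> upd x i t m = x m.
Proof. intro H. unfold upd. destruct (Nat.eqb_spec m i); [contradiction | reflexivity]. Qed.

Lemma upd_id (x : pt) i : upd x i (x i) = x.
Proof.
  apply functional_extensionality. intro m. unfold upd.
  destruct (Nat.eqb_spec m i); subst; reflexivity.
Qed.

Lemma upd_upd (x : pt) i s t : upd (upd x i s) i t = upd x i t.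
Proof.
  apply functional_extensionality. intro m. unfold upd.
  destruct (Nat.eqb_spec m i); reflexivity.
Qed.

Lemma upd_comm (x : pt) i j s t : i <> j -> upd (upd x i s) j t = upd (upd x j t) i s.
Proof.
  intro Hij. apply functional_extensionality. intro m. unfold upd.
  destruct (Nat.eqb_spec m j), (Nat.eqb_spec m i); subst; easy.
Qed.

Lemma pd_spec i f x : has_pd i f x ->
  derivable_pt_lim (fun t => f (upd x i t)) (x i) (pd i f x).
Proof.
  intros [l Hl]. unfold pd.
  apply (epsilon_spec (inhabits 0)
           (fun l => derivable_pt_lim (fun t => f (upd x i t)) (x i) l)).
  now exists l.
Qed.

Lemma pd_unique i f x l :
  derivable_pt_lim (fun t => f (upd x i t)) (x i) l -> pd i f x = l.
Proof.
  intro H. apply (uniqueness_limite _ _ _ _ (pd_spec _ _ _ (ex_intro _ l H)) H).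
Qed.

Lemma derivable_pt_lim_eq f a l l' :
  derivable_pt_lim f a l -> l = l' -> derivable_pt_lim f a l'.
Proof. now intros H <-. Qed.

Lemma derivable_pt_lim_ext f g a l :
  (forall t, f t = g t) -> derivable_pt_lim f a l -> derivable_pt_lim g a l.
Proof. intro E. now replace g with f by (apply functional_extensionality; exact E). Qed.

Lemma derivable_pt_lim_local f g a l d : 0 < d ->
  (forall t, Rabs (t - a) < d -> f t = g t) ->
  derivable_pt_lim f a l -> derivable_pt_lim g a l.
Proof.
  intros Hd E H eps Heps. destruct (H eps Heps) as [del Hdel].
  assert (Hm : 0 < Rmin del d) by (apply Rmin_pos; [apply cond_pos | exact Hd]).
  exists (mkposreal _ Hm). intros h Hh0 Hh. simpl in Hh.
  rewrite <- (E (a + h)), <- (E a).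
  - apply Hdel; auto. apply Rlt_le_trans with (1 := Hh). apply Rmin_l.
  - replace (a - a) with 0 by ring. rewrite Rabs_R0. exact Hd.
  - replace (a + h - a) with h by ring. apply Rlt_le_trans with (1 := Hh). apply Rmin_r.
Qed.

Lemma derivable_pt_lim_sum_f_R0 (F : nat -> R -> R) (dF : nat -> R) a m :
  (forall i, (i <= m)%nat -> derivable_pt_lim (F i) a (dF i)) ->
  derivable_pt_lim (fun t => sum_f_R0 (fun i => F i t) m) a (sum_f_R0 dF m).
Proof.
  induction m as [|m IH]; intro H; simpl; [apply H; lia|].
  apply (derivable_pt_lim_plus (fun t => sum_f_R0 (fun i => F i t) m) (F (S m))).
  - apply IH. intros i Hi. apply H. lia.
  - apply H. lia.
Qed.

Lemma derivable_pt_lim_mult3 (A B C : R -> R) a la lb lc :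
  derivable_pt_lim A a la -> derivable_pt_lim B a lb -> derivable_pt_lim C a lc ->
  derivable_pt_lim (fun t => A t * B t * C t) a
    (la * B a * C a + A a * lb * C a + A a * B a * lc).
Proof.
  intros HA HB HC. eapply derivable_pt_lim_eq.
  - exact (derivable_pt_lim_mult (fun t => A t * B t) C _ _ _
             (derivable_pt_lim_mult A B a la lb HA HB) HC).
  - unfold mult_fct. ring.
Qed.

Definition near (d : R) (y x : pt) : Prop :=
  forall m, (m < 6)%nat -> Rabs (y m - x m) < d.

Definition is_open (U : pt -> Prop) : Prop :=
  forall x, U x -> exists d, 0 < d /\ forall y, near d y x -> U y.

Lemma near_refl d x : 0 < d -> near d x x.
Proof. intros Hd m _. replace (x m - x m) with 0 by ring. now rewrite Rabs_R0. Qed.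

Lemma near_upd (x : pt) i t d : 0 < d -> Rabs (t - x i) < d -> near d (upd x i t) x.
Proof.
  intros Hd Ht m _. unfold upd. destruct (Nat.eqb_spec m i).
  - now subst.
  - replace (x m - x m) with 0 by ring. now rewrite Rabs_R0.
Qed.

Lemma near_Rmin_l d d' y x : near (Rmin d d') y x -> near d y x.
Proof. intros H m Hm. eapply Rlt_le_trans; [apply H, Hm | apply Rmin_l]. Qed.

Lemma near_Rmin_r d d' y x : near (Rmin d d') y x -> near d' y x.
Proof. intros H m Hm. eapply Rlt_le_trans; [apply H, Hm | apply Rmin_r]. Qed.

Lemma cont_at_local f g x d : 0 < d -> (forall y, near d y x -> f y = g y) ->
  cont_at f x -> cont_at g x.
Proof.
  intros Hd E H eps Heps. destruct (H eps Heps) as [del [Hdel Hy]].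
  exists (Rmin del d). split; [now apply Rmin_pos|].
  intros y Hyx Hfar.
  rewrite <- (E x (near_refl d x Hd)), <- E by exact (near_Rmin_r _ _ _ _ Hyx).
  exact (Hy y (near_Rmin_l _ _ _ _ Hyx) Hfar).
Qed.

Lemma Ck_ext U k f g : is_open U -> (forall x, U x -> f x = g x) -> Ck U k f -> Ck U k g.
Proof.
  intro HU. revert f g. induction k as [|k IH]; intros f g E Hf.
  1: intros x Hx. 2: split; [intros x Hx | intros i Hi].
  1,2: destruct (HU x Hx) as [d [Hd Hbox]];
       apply (cont_at_local f g x d Hd); [intros y Hy; apply E, Hbox, Hy | apply Hf, Hx].
  destruct Hf as [_ Hf]. destruct (Hf i Hi) as [Hpd Hk].
  assert (Hg : forall x, U x -> derivable_pt_lim (fun t => g (upd x i t)) (x i) (pd i f x)).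
  { intros x Hx. destruct (HU x Hx) as [d [Hd Hbox]].
    apply (derivable_pt_lim_local (fun t => f (upd x i t)) _ _ _ d Hd).
    - intros t Ht. apply E, Hbox, near_upd; assumption.
    - apply pd_spec, Hpd, Hx. }
  split.
  - intros x Hx. exists (pd i f x). now apply Hg.
  - apply (IH (pd i f)); [|exact Hk]. intros x Hx. symmetry. now apply pd_unique, Hg.
Qed.

Lemma Ck2_inv U f i j : Ck U 2 f -> (i < 6)%nat -> (j < 6)%nat ->
  (forall x, U x -> has_pd i f x) /\ (forall x, U x -> has_pd j (pd i f) x) /\
  (forall x, U x -> cont_at (pd j (pd i f)) x).
Proof.
  intros [_ Hf] Hi Hj. destruct (Hf i Hi) as [Hpd [_ Hf2]].
  destruct (Hf2 j Hj) as [Hpd2 Hc]. auto.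
Qed.

Lemma Dom_open : is_open Dom.
Proof.
  assert (Hsq : forall r r', r <> 0 -> 0 < r ^ 2 + r' ^ 2).
  { intros r r' Hr. pose proof (pow2_ge_0 r').
    assert (0 < r ^ 2) by (rewrite <- Rsqr_pow2; now apply Rsqr_pos_lt). lra. }
  assert (Hstay : forall (x y : pt) m, x m <> 0 -> Rabs (y m - x m) < Rabs (x m) -> y m <> 0).
  { intros x y m Hx Hy E. rewrite E, Rminus_0_l, Rabs_Ropp in Hy. lra. }
  intros x Hx. unfold Dom in *.
  destruct (Req_dec (x 3%nat) 0) as [H3|H3].
  - assert (H4 : x 4%nat <> 0) by (intro H4; rewrite H3, H4 in Hx; lra).
    exists (Rabs (x 4%nat)). split; [now apply Rabs_pos_lt|].
    intros y Hy. rewrite Rplus_comm. apply Hsq, (Hstay x), Hy; [exact H4 | lia].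
  - exists (Rabs (x 3%nat)). split; [now apply Rabs_pos_lt|].
    intros y Hy. apply Hsq, (Hstay x), Hy; [exact H3 | lia].
Qed.

(** * Elementary expressions are smooth where they are defined *)

Lemma cont_at_ext f g x : (forall y, f y = g y) -> cont_at f x -> cont_at g x.
Proof. intro E. now replace g with f by (apply functional_extensionality; exact E). Qed.

Lemma cont_at_const r x : cont_at (fun _ => r) x.
Proof.
  intros eps He. exists 1. split; [lra|]. intros.
  replace (r - r) with 0 by ring. now rewrite Rabs_R0.
Qed.

Lemma cont_at_coord m x : cont_at (fun y => y m) x.
Proof.
  intros eps He. exists eps. split; [exact He|]. intros y Hnear Hfar.
  destruct (Nat.lt_ge_cases m 6) as [Hm|Hm]; [now apply Hnear|].
  rewrite (Hfar m Hm). replace (x m - x m) with 0 by ring. now rewrite Rabs_R0.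
Qed.

Lemma cont_at_plus f g x : cont_at f x -> cont_at g x -> cont_at (fun y => f y + g y) x.
Proof.
  intros Hf Hg eps He.
  destruct (Hf (eps / 2) ltac:(lra)) as [d1 [Hd1 H1]].
  destruct (Hg (eps / 2) ltac:(lra)) as [d2 [Hd2 H2]].
  exists (Rmin d1 d2). split; [now apply Rmin_pos|]. intros y Hy Hfar.
  specialize (H1 y (near_Rmin_l _ _ _ _ Hy) Hfar).
  specialize (H2 y (near_Rmin_r _ _ _ _ Hy) Hfar).
  replace (f y + g y - (f x + g x)) with ((f y - f x) + (g y - g x)) by ring.
  eapply Rle_lt_trans; [apply Rabs_triang | lra].
Qed.

Lemma cont_at_comp (h : R -> R) f x :
  continuity_pt h (f x) -> cont_at f x -> cont_at (fun y => h (f y)) x.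
Proof.
  intros Hh Hf eps He. destruct (Hh eps He) as [a [Ha Hx]].
  destruct (Hf a Ha) as [d [Hd Hy]]. exists d. split; [exact Hd|]. intros y H1 H2.
  specialize (Hy y H1 H2).
  destruct (Req_dec (f y) (f x)) as [E|E].
  - rewrite E. replace (h (f x) - h (f x)) with 0 by ring. now rewrite Rabs_R0.
  - apply (Hx (f y)). repeat split; auto.
Qed.

Lemma continuity_pt_of_lim h a l : derivable_pt_lim h a l -> continuity_pt h a.
Proof. intro H. apply derivable_continuous_pt. now exists l. Qed.

Lemma derivable_pt_lim_Rinv y : y <> 0 -> derivable_pt_lim Rinv y (- / (y * y)).
Proof.
  intro Hy. eapply derivable_pt_lim_eq.
  - apply (derivable_pt_lim_ext (fct_cte 1 / id)%F).
    + intro t. unfold div_fct, fct_cte, id, Rdiv. ring.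
    + apply derivable_pt_lim_div;
        [apply derivable_pt_lim_const | apply derivable_pt_lim_id | exact Hy].
  - unfold fct_cte, id, Rsqr. field. exact Hy.
Qed.

Lemma cont_at_scal r f x : cont_at f x -> cont_at (fun y => r * f y) x.
Proof.
  apply (cont_at_comp (Rmult r)), (continuity_pt_of_lim _ _ (r * 1)).
  apply (derivable_pt_lim_scal id), derivable_pt_lim_id.
Qed.

Lemma cont_at_opp f x : cont_at f x -> cont_at (fun y => - f y) x.
Proof.
  intro H. apply (cont_at_ext (fun y => -1 * f y)); [intro; ring | now apply cont_at_scal].
Qed.

Lemma cont_at_pow f x k : cont_at f x -> cont_at (fun y => f y ^ k) x.
Proof.
  apply (cont_at_comp (fun t => t ^ k)). eapply continuity_pt_of_lim, derivable_pt_lim_pow.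
Qed.

Lemma cont_at_mult f g x : cont_at f x -> cont_at g x -> cont_at (fun y => f y * g y) x.
Proof.
  intros Hf Hg.
  apply (cont_at_ext (fun y => / 4 * ((f y + g y) ^ 2 + - (f y + - g y) ^ 2))).
  - intro y. field.
  - apply cont_at_scal, cont_at_plus.
    + now apply cont_at_pow, cont_at_plus.
    + now apply cont_at_opp, cont_at_pow, cont_at_plus, cont_at_opp.
Qed.

Inductive expr : Type :=
| EC (r : R) | EV (m : nat) | EAdd (a b : expr) | EMul (a b : expr) | EOpp (a : expr)
| EInv (a : expr) | EPow (a : expr) (k : nat) | ESqrt (a : expr) | EAtan (a : expr).

Definition ESub (a b : expr) : expr := EAdd a (EOpp b).
Definition EDiv (a b : expr) : expr := EMul a (EInv b).

Fixpoint eval (e : expr) (x : pt) : R :=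
  match e with
  | EC r => r
  | EV m => x m
  | EAdd a b => eval a x + eval b x
  | EMul a b => eval a x * eval b x
  | EOpp a => - eval a x
  | EInv a => / eval a x
  | EPow a k => eval a x ^ k
  | ESqrt a => sqrt (eval a x)
  | EAtan a => atan (eval a x)
  end.

Fixpoint deriv (e : expr) (i : nat) : expr :=
  match e with
  | EC _ => EC 0
  | EV m => EC (if Nat.eqb m i then 1 else 0)
  | EAdd a b => EAdd (deriv a i) (deriv b i)
  | EMul a b => EAdd (EMul (deriv a i) b) (EMul a (deriv b i))
  | EOpp a => EOpp (deriv a i)
  | EInv a => EOpp (EMul (deriv a i) (EMul (EInv a) (EInv a)))
  | EPow a k => EMul (EMul (EC (INR k)) (EPow a (pred k))) (deriv a i)
  | ESqrt a => EMul (deriv a i) (EInv (EMul (EC 2) (ESqrt a)))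
  | EAtan a => EMul (deriv a i) (EInv (EAdd (EC 1) (EPow a 2)))
  end.

(* [sqrt] is differentiable only at positive arguments. *)
Fixpoint defined (e : expr) (x : pt) : Prop :=
  match e with
  | EC _ | EV _ => True
  | EAdd a b | EMul a b => defined a x /\ defined b x
  | EOpp a | EPow a _ | EAtan a => defined a x
  | EInv a => defined a x /\ eval a x <> 0
  | ESqrt a => defined a x /\ 0 < eval a x
  end.

Lemma defined_deriv e i x : defined e x -> defined (deriv e i) x.
Proof.
  induction e; simpl; intros; try tauto.
  - destruct H as [Ha Hp]. repeat split; auto.
    apply Rmult_integral_contrapositive. split; [lra | apply Rgt_not_eq, sqrt_lt_R0, Hp].
  - repeat split; auto. pose proof (pow2_ge_0 (eval e x)). simpl in *. lra.
Qed.

Lemma cont_at_eval e x : defined e x -> cont_at (eval e) x.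
Proof.
  induction e; simpl; intro Hdef.
  - apply cont_at_const.
  - apply cont_at_coord.
  - apply cont_at_plus; tauto.
  - apply cont_at_mult; tauto.
  - apply cont_at_opp; tauto.
  - destruct Hdef as [Ha Hn]. apply (cont_at_comp Rinv); auto.
    eapply continuity_pt_of_lim, derivable_pt_lim_Rinv, Hn.
  - apply cont_at_pow; auto.
  - destruct Hdef as [Ha Hp]. apply (cont_at_comp sqrt); auto.
    apply continuity_pt_sqrt; lra.
  - apply (cont_at_comp atan); auto. eapply continuity_pt_of_lim, derivable_pt_lim_atan.
Qed.

Lemma derivable_pt_lim_chain f h a b l l2 :
  derivable_pt_lim f a l -> f a = b -> derivable_pt_lim h b l2 ->
  derivable_pt_lim (fun t => h (f t)) a (l2 * l).
Proof. intros H1 <- H2. now apply (derivable_pt_lim_comp f h). Qed.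

Lemma derivable_pt_lim_eval e i x : defined e x ->
  derivable_pt_lim (fun t => eval e (upd x i t)) (x i) (eval (deriv e i) x).
Proof.
  induction e; simpl; intro Hdef.
  - apply derivable_pt_lim_const.
  - unfold upd. destruct (Nat.eqb m i);
      [apply derivable_pt_lim_id | apply derivable_pt_lim_const].
  - apply (derivable_pt_lim_plus (fun t => eval e1 (upd x i t)) (fun t => eval e2 (upd x i t)));
      [apply IHe1 | apply IHe2]; tauto.
  - eapply derivable_pt_lim_eq.
    + apply (derivable_pt_lim_mult (fun t => eval e1 (upd x i t)) (fun t => eval e2 (upd x i t)));
        [apply IHe1 | apply IHe2]; tauto.
    + now rewrite upd_id.
  - apply (derivable_pt_lim_opp (fun t => eval e (upd x i t))), IHe, Hdef.
  - destruct Hdef as [Ha Hn]. eapply derivable_pt_lim_eq.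
    + eapply derivable_pt_lim_chain;
        [apply IHe, Ha | now rewrite upd_id | apply derivable_pt_lim_Rinv, Hn].
    + field. exact Hn.
  - eapply derivable_pt_lim_eq.
    + eapply (derivable_pt_lim_chain _ (fun y => y ^ k));
        [apply IHe, Hdef | now rewrite upd_id | apply derivable_pt_lim_pow].
    + ring.
  - destruct Hdef as [Ha Hp]. eapply derivable_pt_lim_eq.
    + eapply derivable_pt_lim_chain;
        [apply IHe, Ha | now rewrite upd_id | apply derivable_pt_lim_sqrt, Hp].
    + ring.
  - eapply derivable_pt_lim_eq.
    + eapply derivable_pt_lim_chain;
        [apply IHe, Hdef | now rewrite upd_id | apply derivable_pt_lim_atan].
    + simpl. ring.
Qed.

Lemma pd_eval e i x : defined e x -> pd i (eval e) x = eval (deriv e i) x.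
Proof. intro Hdef. now apply pd_unique, derivable_pt_lim_eval. Qed.

Lemma Ck_eval U e k : is_open U -> (forall x, U x -> defined e x) -> Ck U k (eval e).
Proof.
  intro HU. revert e. induction k as [|k IH]; intros e Hdef.
  - intros x Hx. now apply cont_at_eval, Hdef.
  - split; [intros x Hx; now apply cont_at_eval, Hdef|]. intros i Hi. split.
    + intros x Hx. eexists. now apply derivable_pt_lim_eval, Hdef.
    + apply (Ck_ext U k (eval (deriv e i))); [exact HU | | ].
      * intros x Hx. symmetry. now apply pd_eval, Hdef.
      * apply IH. intros x Hx. now apply defined_deriv, Hdef.
Qed.

(** * Symmetry of second partial derivatives *)

Definition plane (x : pt) (i j : nat) (s t : R) : pt := upd (upd x i s) j t.

Lemma plane_swap x i j s t : i <> j -> plane x j i t s = plane x i j s t.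
Proof. intro Hij. unfold plane. now apply upd_comm. Qed.

Lemma derivable_pt_lim_plane g x i j s t : has_pd j g (plane x i j s t) ->
  derivable_pt_lim (fun t' => g (plane x i j s t')) t (pd j g (plane x i j s t)).
Proof.
  intro H. pose proof (pd_spec j g _ H) as D. unfold plane in *.
  rewrite upd_eq in D. revert D. apply derivable_pt_lim_ext.
  intro t'. now rewrite upd_upd.
Qed.

Lemma plane_near d x i j s t :
  Rabs (s - x i) < d -> Rabs (t - x j) < d -> near d (plane x i j s t) x.
Proof.
  intros Hs Ht m _. unfold plane, upd.
  destruct (Nat.eqb_spec m j); [now subst|].
  destruct (Nat.eqb_spec m i); [now subst|].
  replace (x m - x m) with 0 by ring. rewrite Rabs_R0.
  eapply Rle_lt_trans; [apply Rabs_pos | exact Hs].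
Qed.

Lemma plane_far x i j s t :
  (i < 6)%nat -> (j < 6)%nat -> forall m, (6 <= m)%nat -> plane x i j s t m = x m.
Proof. intros Hi Hj m Hm. unfold plane. now rewrite !upd_neq by lia. Qed.

Definition second_diff (f : pt -> R) x i j a b h : R :=
  f (plane x i j (a + h) (b + h)) - f (plane x i j (a + h) b)
  - f (plane x i j a (b + h)) + f (plane x i j a b).

Lemma second_diff_swap f x i j a b h :
  i <> j -> second_diff f x j i b a h = second_diff f x i j a b h.
Proof. intro Hij. unfold second_diff. rewrite !(plane_swap x i j) by exact Hij. ring. Qed.

(* Two applications of the mean value theorem, first in the [i]-th then in the [j]-th coordinate. *)
Lemma second_diff_mvt f x i j a b h : i <> j -> 0 < h ->
  (forall s t, a <= s <= a + h -> b <= t <= b + h ->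
     has_pd i f (plane x i j s t) /\ has_pd j (pd i f) (plane x i j s t)) ->
  exists s t, a < s < a + h /\ b < t < b + h /\
    second_diff f x i j a b h = h * h * pd j (pd i f) (plane x i j s t).
Proof.
  intros Hij Hh Hpd.
  assert (Di : forall g s t, has_pd i g (plane x i j s t) ->
            derivable_pt_lim (fun s' => g (plane x i j s' t)) s (pd i g (plane x i j s t))).
  { intros g s t H. rewrite <- (plane_swap x i j) in H |- * by exact Hij.
    apply (derivable_pt_lim_ext (fun s' => g (plane x j i t s'))).
    - intro s'. now rewrite plane_swap.
    - now apply derivable_pt_lim_plane. }
  destruct (MVT_cor2 (fun s => f (plane x i j s (b + h)) - f (plane x i j s b))
              (fun s => pd i f (plane x i j s (b + h)) - pd i f (plane x i j s b)) a (a + h))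
    as [s [Es Hs]]; [lra| |].
  { intros s Hs. apply (derivable_pt_lim_minus (fun s => f (plane x i j s (b + h)))
                          (fun s => f (plane x i j s b)));
      apply Di, Hpd; lra. }
  destruct (MVT_cor2 (fun t => pd i f (plane x i j s t))
              (fun t => pd j (pd i f) (plane x i j s t)) b (b + h)) as [t [Et Ht]]; [lra| |].
  { intros t Ht. apply derivable_pt_lim_plane, Hpd; lra. }
  exists s, t. split; [exact Hs|]. split; [exact Ht|].
  replace (a + h - a) with h in Es by ring. replace (b + h - b) with h in Et by ring.
  cbv beta in Es. rewrite Et in Es. unfold second_diff. lra.
Qed.

Lemma schwarz U f x i j : is_open U -> Ck U 2 f -> U x -> (i < 6)%nat -> (j < 6)%nat ->
  pd i (pd j f) x = pd j (pd i f) x.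
Proof.
  intros HU Hf Hx Hi Hj. destruct (Nat.eq_dec i j) as [<-|Hij]; [reflexivity|].
  destruct (Ck2_inv U f i j Hf Hi Hj) as [Hpdi [Hpdij Hcij]].
  destruct (Ck2_inv U f j i Hf Hj Hi) as [Hpdj [Hpdji Hcji]].
  destruct (HU x Hx) as [d [Hd Hball]].
  apply cond_eq. intros eps Heps.
  destruct (Hcji x Hx (eps / 2) ltac:(lra)) as [d1 [Hd1 C1]].
  destruct (Hcij x Hx (eps / 2) ltac:(lra)) as [d2 [Hd2 C2]].
  set (r := Rmin d (Rmin d1 d2)). set (h := r / 2).
  assert (Hr : 0 < r) by (unfold r; repeat apply Rmin_pos; lra).
  assert (Hsq : forall s t, x i <= s <= x i + h -> x j <= t <= x j + h ->
            near r (plane x i j s t) x).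
  { intros s t Hs Ht. apply plane_near; apply Rabs_def1; unfold h in *; lra. }
  assert (Hball' : forall s t, x i <= s <= x i + h -> x j <= t <= x j + h ->
            U (plane x i j s t)).
  { intros s t Hs Ht. apply Hball, (near_Rmin_l _ _ _ _ (Hsq s t Hs Ht)). }
  destruct (second_diff_mvt f x i j (x i) (x j) h Hij ltac:(unfold h; lra))
    as [s1 [t1 [Hs1 [Ht1 E1]]]].
  { intros s t Hs Ht. split; [apply Hpdi | apply Hpdij]; now apply Hball'. }
  destruct (second_diff_mvt f x j i (x j) (x i) h (not_eq_sym Hij) ltac:(unfold h; lra))
    as [t2 [s2 [Ht2 [Hs2 E2]]]].
  { intros t s Ht Hs. rewrite plane_swap by exact Hij.
    split; [apply Hpdj | apply Hpdji]; now apply Hball'. }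
  rewrite second_diff_swap, E1, (plane_swap x i j) in E2 by exact Hij.
  apply Rmult_eq_reg_l in E2; [|unfold h; nra].
  specialize (C1 _ (near_Rmin_l _ _ _ _ (near_Rmin_r _ _ _ _ (Hsq s2 t2 ltac:(lra) ltac:(lra))))
                (plane_far x i j s2 t2 Hi Hj)).
  specialize (C2 _ (near_Rmin_r _ _ _ _ (near_Rmin_r _ _ _ _ (Hsq s1 t1 ltac:(lra) ltac:(lra))))
                (plane_far x i j s1 t1 Hi Hj)).
  rewrite E2 in C2.
  replace (pd i (pd j f) x - pd j (pd i f) x)
    with ((pd i (pd j f) (plane x i j s2 t2) - pd j (pd i f) x)
          - (pd i (pd j f) (plane x i j s2 t2) - pd i (pd j f) x)) by ring.
  eapply Rle_lt_trans; [apply Rabs_triang|]. rewrite Rabs_Ropp. lra.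
Qed.

Definition grad (f : pt -> R) (x : pt) : nat -> R := fun i => pd i f x.
Definition hess (f : pt -> R) (x : pt) : nat -> nat -> R := fun i j => pd j (pd i f) x.

Lemma hess_symm U f x : is_open U -> Ck U 2 f -> U x ->
  forall i j, (i < 6)%nat -> (j < 6)%nat -> hess f x i j = hess f x j i.
Proof. intros HU Hf Hx i j Hi Hj. unfold hess. now apply (schwarz U). Qed.

(** * The Jacobi identity as an algebraic identity *)

Definition sum6 (F : nat -> R) : R := sum_f_R0 F 5.

Lemma sum6_ext F G : (forall i, (i < 6)%nat -> F i = G i) -> sum6 F = sum6 G.
Proof. intro H. apply sum_eq. intros i Hi. apply H. lia. Qed.

Lemma sum6_plus F G : sum6 (fun i => F i + G i) = sum6 F + sum6 G.
Proof. unfold sum6. now rewrite sum_plus. Qed.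

Lemma sum6_opp F : sum6 (fun i => - F i) = - sum6 F.
Proof. unfold sum6; simpl; ring. Qed.

Lemma sum6_mult_l r F : r * sum6 F = sum6 (fun i => r * F i).
Proof. unfold sum6; simpl; ring. Qed.

Lemma sum6_eq0 F : (forall i, (i < 6)%nat -> F i = 0) -> sum6 F = 0.
Proof. intro H. unfold sum6; simpl. rewrite !H by lia. ring. Qed.

Lemma sum6_swap (F : nat -> nat -> R) :
  sum6 (fun i => sum6 (fun j => F i j)) = sum6 (fun j => sum6 (fun i => F i j)).
Proof. unfold sum6; simpl; ring. Qed.

Lemma sum6_rot3 (F : nat -> nat -> nat -> R) :
  sum6 (fun k => sum6 (fun i => sum6 (fun j => F k i j))) =
  sum6 (fun j => sum6 (fun k => sum6 (fun i => F k i j))).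
Proof.
  rewrite <- (sum6_swap (fun k j => sum6 (fun i => F k i j))).
  apply sum6_ext. intros k _. apply sum6_swap.
Qed.

Definition qform (B : nat -> nat -> R) (u v : nat -> R) : R :=
  sum6 (fun i => sum6 (fun j => u i * B i j * v j)).

Lemma qform_row B u v : qform B u v = sum6 (fun i => u i * sum6 (fun j => B i j * v j)).
Proof. apply sum6_ext. intros i _. rewrite sum6_mult_l. apply sum6_ext. intros; ring. Qed.

Lemma qform_col B u v : qform B u v = sum6 (fun j => sum6 (fun i => u i * B i j) * v j).
Proof. unfold qform, sum6; simpl; ring. Qed.

Lemma qform_plus_r B u v w :
  qform B u (fun j => v j + w j) = qform B u v + qform B u w.
Proof.
  unfold qform. rewrite <- sum6_plus. apply sum6_ext. intros i _.
  rewrite <- sum6_plus. apply sum6_ext. intros; ring.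
Qed.

Lemma qform_symm B u v : (forall i j, (i < 6)%nat -> (j < 6)%nat -> B i j = B j i) ->
  qform B u v = qform B v u.
Proof.
  intro HB. unfold qform. rewrite sum6_swap. apply sum6_ext. intros j Hj.
  apply sum6_ext. intros i Hi. rewrite HB by assumption. ring.
Qed.

Section JacobiAlgebra.

(* [p i j] and [dp i j l] stand for the entries of a Poisson matrix at a point
   and their [l]-th partial derivatives there. *)
Variables (p : nat -> nat -> R) (dp : nat -> nat -> nat -> R).

(* The [l]-th partial derivative of the bracket [qform p b c] of two functions whose
   gradients are [b], [c] and Hessians [b2], [c2]: product rule. *)
Definition bracket_pd (b c : nat -> R) (b2 c2 : nat -> nat -> R) (l : nat) : R :=
  qform p (fun i => b2 i l) c + qform (fun i j => dp i j l) b c + qform p b (fun j => c2 j l).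

Definition jacobiator (k i j : nat) : R :=
  sum6 (fun l => p k l * dp i j l + p i l * dp j k l + p j l * dp k i l).

Lemma qform_dp_expand a b c :
  qform p a (fun l => qform (fun i j => dp i j l) b c) =
  sum6 (fun k => sum6 (fun i => sum6 (fun j => a k * b i * c j * sum6 (fun l => p k l * dp i j l)))).
Proof.
  unfold qform. apply sum6_ext. intros k _.
  transitivity (sum6 (fun l => sum6 (fun i => sum6 (fun j => a k * b i * c j * (p k l * dp i j l))))).
  { apply sum6_ext. intros l _. rewrite sum6_mult_l. apply sum6_ext. intros i _.
    rewrite sum6_mult_l. apply sum6_ext. intros j _. ring. }
  rewrite sum6_swap. apply sum6_ext. intros i _.
  rewrite sum6_swap. apply sum6_ext. intros j _. now rewrite sum6_mult_l.
Qed.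

Hypothesis jacobiator_zero : forall k i j, (k < 6)%nat -> (i < 6)%nat -> (j < 6)%nat ->
  jacobiator k i j = 0.

Lemma qform_dp_cyclic a b c :
  qform p a (fun l => qform (fun i j => dp i j l) b c)
  + qform p b (fun l => qform (fun i j => dp i j l) c a)
  + qform p c (fun l => qform (fun i j => dp i j l) a b) = 0.
Proof.
  rewrite !qform_dp_expand.
  rewrite (sum6_rot3 (fun k i j => b k * c i * a j * sum6 (fun l => p k l * dp i j l))).
  rewrite (sum6_rot3 (fun k i j => c k * a i * b j * sum6 (fun l => p k l * dp i j l))).
  rewrite (sum6_rot3 (fun k i j => c i * a j * b k * sum6 (fun l => p i l * dp j k l))).
  rewrite <- !sum6_plus. apply sum6_eq0. intros k Hk.
  rewrite <- !sum6_plus. apply sum6_eq0. intros i Hi.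
  rewrite <- !sum6_plus. apply sum6_eq0. intros j Hj.
  rewrite <- (Rmult_0_r (a k * b i * c j)), <- (jacobiator_zero k i j Hk Hi Hj).
  unfold jacobiator. rewrite !sum6_plus. ring.
Qed.

Hypothesis p_skew : forall i j, (i < 6)%nat -> (j < 6)%nat -> p i j = - p j i.

Lemma row_skew i v : (i < 6)%nat ->
  sum6 (fun j => p i j * v j) = - sum6 (fun j => v j * p j i).
Proof.
  intro Hi. rewrite <- sum6_opp. apply sum6_ext. intros j Hj. rewrite p_skew by assumption. ring.
Qed.

(* The second-derivative terms of the Jacobi sum cancel in pairs: with [u := a^T p] and
   [v := c^T p], the two terms below are [- u^T B v] and [u^T B v]. *)
Lemma hessian_terms_cancel a c B : (forall i j, (i < 6)%nat -> (j < 6)%nat -> B i j = B j i) ->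
  qform p a (fun l => qform p (fun i => B i l) c)
  + qform p c (fun l => qform p a (fun j => B j l)) = 0.
Proof.
  intro HB.
  pose (u l := sum6 (fun k => a k * p k l)). pose (v l := sum6 (fun k => c k * p k l)).
  assert (E1 : qform p a (fun l => qform p (fun i => B i l) c) = - qform B u v).
  { rewrite qform_col, (qform_row B u v), <- sum6_opp. apply sum6_ext. intros l Hl.
    fold (u l). rewrite qform_row, Ropp_mult_distr_r. f_equal.
    rewrite <- sum6_opp. apply sum6_ext. intros i Hi.
    rewrite row_skew, HB by assumption. fold (v i). ring. }
  assert (E2 : qform p c (fun l => qform p a (fun j => B j l)) = qform B u v).
  { rewrite qform_col, (qform_symm B u v HB), (qform_row B v u).
    apply sum6_ext. intros l Hl. fold (v l). rewrite qform_col. f_equal.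
    apply sum6_ext. intros j Hj. fold (u j). rewrite HB by assumption. ring. }
  rewrite E1, E2. ring.
Qed.

Lemma jacobi_algebraic a b c a2 b2 c2 :
  (forall i j, (i < 6)%nat -> (j < 6)%nat -> a2 i j = a2 j i) ->
  (forall i j, (i < 6)%nat -> (j < 6)%nat -> b2 i j = b2 j i) ->
  (forall i j, (i < 6)%nat -> (j < 6)%nat -> c2 i j = c2 j i) ->
  qform p a (bracket_pd b c b2 c2) + qform p b (bracket_pd c a c2 a2)
  + qform p c (bracket_pd a b a2 b2) = 0.
Proof.
  intros Ha Hb Hc. unfold bracket_pd. rewrite !qform_plus_r.
  pose proof (hessian_terms_cancel a c b2 Hb). pose proof (hessian_terms_cancel b a c2 Hc).
  pose proof (hessian_terms_cancel c b a2 Ha). pose proof (qform_dp_cyclic a b c).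
  lra.
Qed.

End JacobiAlgebra.

Section Jacobiator.
Variables (p : nat -> nat -> R) (dp : nat -> nat -> nat -> R).

Lemma jacobiator_cyclic k i j : jacobiator p dp k i j = jacobiator p dp i j k.
Proof. apply sum6_ext. intros; ring. Qed.

Hypothesis dp_skew : forall i j l, (i < 6)%nat -> (j < 6)%nat -> (l < 6)%nat ->
  dp i j l = - dp j i l.

Lemma jacobiator_swap k i j : (k < 6)%nat -> (i < 6)%nat -> (j < 6)%nat ->
  jacobiator p dp i k j = - jacobiator p dp k i j.
Proof.
  intros Hk Hi Hj. unfold jacobiator. rewrite <- sum6_opp. apply sum6_ext. intros l Hl.
  rewrite (dp_skew k j l), (dp_skew j i l), (dp_skew i k l) by assumption. ring.
Qed.

(* The jacobiator is totally antisymmetric, so its strictly increasing triples determine it. *)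
Lemma jacobiator_zero_of_sorted :
  (forall k i j, (k < i)%nat -> (i < j)%nat -> (j < 6)%nat -> jacobiator p dp k i j = 0) ->
  forall k i j, (k < 6)%nat -> (i < 6)%nat -> (j < 6)%nat -> jacobiator p dp k i j = 0.
Proof.
  intros Hsorted.
  assert (Hrep : forall k j, (k < 6)%nat -> (j < 6)%nat -> jacobiator p dp k k j = 0).
  { intros k j Hk Hj. pose proof (jacobiator_swap k k j Hk Hk Hj). lra. }
  intros k i j Hk Hi Hj.
  destruct (Nat.eq_dec k i) as [<-|]; [now apply Hrep|].
  destruct (Nat.eq_dec i j) as [<-|]; [rewrite jacobiator_cyclic; now apply Hrep|].
  destruct (Nat.eq_dec k j) as [<-|]; [do 2 rewrite jacobiator_cyclic; now apply Hrep|].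
  destruct (Nat.lt_ge_cases k i), (Nat.lt_ge_cases i j), (Nat.lt_ge_cases k j); try lia.
  - apply Hsorted; lia.
  - rewrite jacobiator_cyclic, (jacobiator_swap j i k), (jacobiator_cyclic j i k),
      (jacobiator_cyclic i k j), (Hsorted k j i) by lia; ring.
  - do 2 rewrite jacobiator_cyclic. apply Hsorted; lia.
  - rewrite (jacobiator_swap i k j), (Hsorted i k j) by lia; ring.
  - rewrite jacobiator_cyclic. apply Hsorted; lia.
  - rewrite (jacobiator_swap i k j), (jacobiator_cyclic i k j), (jacobiator_cyclic k j i),
      (Hsorted j i k) by lia; ring.
Qed.

End Jacobiator.

(** * The bracket of the theorem *)

Section RigidBody.
Variables c N n n1 n2 : R.

Definition eRho : expr := ESqrt (EAdd (EPow (EV 3) 2) (EPow (EV 4) 2)).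

Definition eMu1 : expr :=
  EMul (EC c) (EAdd (ESub (EAdd (EAdd (ESub (EMul (EOpp (EC n)) (EV 3))
    (EMul (EC n1) (EPow (EV 3) 2))) (EMul (EMul (EC 2) (EC n1)) (EPow (EV 4) 2)))
    (EMul (EC n1) (EPow (EV 5) 2))) (EMul (EMul (EMul (EC 3) (EC n2)) (EV 3)) (EV 4)))
    (EDiv (EMul (EC N) (EV 3)) (EPow eRho 3))).

Definition eMu2 : expr :=
  EMul (EC c) (EAdd (ESub (EAdd (ESub (EAdd (EMul (EOpp (EC n)) (EV 4))
    (EMul (EMul (EC 2) (EC n2)) (EPow (EV 3) 2))) (EMul (EC n2) (EPow (EV 4) 2)))
    (EMul (EC n2) (EPow (EV 5) 2))) (EMul (EMul (EMul (EC 3) (EC n1)) (EV 3)) (EV 4)))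
    (EDiv (EMul (EC N) (EV 4)) (EPow eRho 3))).

Definition eMu3 : expr :=
  EMul (EMul (EOpp (EC c)) (EV 5)) (EAdd (EAdd (EAdd (EMul (EC 3) (EC n))
    (EMul (EMul (EC 5) (EC n1)) (EV 3))) (EMul (EMul (EC 5) (EC n2)) (EV 4)))
    (EDiv (EMul (EC N) (EV 5)) eRho)).

Definition ePi (i j : nat) : expr :=
  match (i, j) with
  | (0, 1)%nat => ESub (EOpp (EV 2)) eMu3 | (0, 2)%nat => EAdd (EV 1) eMu2
  | (0, 4)%nat => EOpp (EV 5) | (0, 5)%nat => EV 4
  | (1, 0)%nat => EAdd (EV 2) eMu3 | (1, 2)%nat => ESub (EOpp (EV 0)) eMu1
  | (1, 3)%nat => EV 5 | (1, 5)%nat => EOpp (EV 3)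
  | (2, 0)%nat => ESub (EOpp (EV 1)) eMu2 | (2, 1)%nat => EAdd (EV 0) eMu1
  | (2, 3)%nat => EOpp (EV 4) | (2, 4)%nat => EV 3
  | (3, 1)%nat => EOpp (EV 5) | (3, 2)%nat => EV 4
  | (4, 0)%nat => EV 5 | (4, 2)%nat => EOpp (EV 3)
  | (5, 0)%nat => EOpp (EV 4) | (5, 1)%nat => EV 3
  | _ => EC 0
  end.

(* [|gamma|^2] is written [rho^2 + gamma_3^2]: the Casimir condition then holds as a rational
   identity in the coordinates and [rho], without using [rho^2 = gamma_1^2 + gamma_2^2]. *)
Definition eCas : expr :=
  EAdd (EAdd (EAdd (EAdd (EMul (EV 0) (EV 3)) (EMul (EV 1) (EV 4))) (EMul (EV 2) (EV 5)))
    (EMul (EMul (EC c) (EAdd (EAdd (EC n) (EMul (EC n1) (EV 3))) (EMul (EC n2) (EV 4))))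
       (EAdd (EAdd (EMul (EC 2) (EPow (EV 3) 2)) (EMul (EC 2) (EPow (EV 4) 2))) (EPow (EV 5) 2))))
    (EMul (EMul (EMul (EInv (EC 2)) (EC c)) (EC N))
       (ESub (EDiv (ESub (EMul (EV 5) (EPow eRho 2)) (EC 2)) eRho)
          (EMul (EAdd (EPow eRho 2) (EPow (EV 5) 2)) (EAtan (EDiv (EV 5) eRho))))).

Let P := Pi (mu1 c N n n1 n2) (mu2 c N n n1 n2) (mu3 c N n n1 n2).

Definition dPi (x : pt) (i j l : nat) : R := eval (deriv (ePi i j) l) x.

Lemma Pi_eval x i j : P x i j = eval (ePi i j) x.
Proof. destruct i as [|[|[|[|[|[|i]]]]]], j as [|[|[|[|[|[|j]]]]]]; reflexivity. Qed.

Lemma Cas_eval x : Cas c N n n1 n2 x = eval eCas x.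
Proof.
  unfold Cas, rho. cbn [eval eCas eRho ESub EDiv].
  rewrite pow2_sqrt by (pose proof (pow2_ge_0 (x 3%nat)); pose proof (pow2_ge_0 (x 4%nat)); lra).
  reflexivity.
Qed.

Ltac defined_on_Dom HD :=
  unfold Dom in HD; simpl in HD |- *; pose proof (sqrt_lt_R0 _ HD);
  set (s := sqrt _) in *; repeat split; try lra;
  try (apply Rgt_not_eq, Rlt_gt; repeat apply Rmult_lt_0_compat; lra).

Lemma defined_ePi x i j : Dom x -> defined (ePi i j) x.
Proof.
  intro HD. destruct i as [|[|[|[|[|[|i]]]]]], j as [|[|[|[|[|[|j]]]]]]; try exact I;
    cbn [ePi]; defined_on_Dom HD.
Qed.

Lemma defined_eCas x : Dom x -> defined eCas x.
Proof. intro HD. unfold eCas. defined_on_Dom HD. Qed.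

Lemma Pi_skew x i j : P x i j = - P x j i.
Proof.
  rewrite !Pi_eval.
  destruct i as [|[|[|[|[|[|i]]]]]], j as [|[|[|[|[|[|j]]]]]]; cbn [ePi eval ESub]; ring.
Qed.

Lemma dPi_skew x i j l : dPi x i j l = - dPi x j i l.
Proof.
  unfold dPi.
  destruct i as [|[|[|[|[|[|i]]]]]], j as [|[|[|[|[|[|j]]]]]]; cbn [ePi deriv eval ESub]; ring.
Qed.

(* Both the structure equations of [Pi] and the Casimir equations are rational identities in
   the coordinates and [rho]; [field] needs only [rho <> 0]. *)
Ltac rational_identity HD :=
  unfold Dom in HD; simpl in HD; pose proof (sqrt_lt_R0 _ HD);
  unfold jacobiator, sum6, dPi, P, Pi, mu1, mu2, mu3, rho; simpl; set (s := sqrt _) in *;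
  field; repeat split; nra.

Lemma jacobiator_Pi x : Dom x -> forall k i j, (k < 6)%nat -> (i < 6)%nat -> (j < 6)%nat ->
  jacobiator (P x) (dPi x) k i j = 0.
Proof.
  intro HD. apply jacobiator_zero_of_sorted; [intros; apply dPi_skew|].
  intros k i j Hki Hij Hj.
  destruct k as [|[|[|[|[|[|k]]]]]]; try lia; destruct i as [|[|[|[|[|[|i]]]]]]; try lia;
    destruct j as [|[|[|[|[|[|j]]]]]]; try lia; rational_identity HD.
Qed.

Lemma Pi_grad_Cas x i : Dom x -> (i < 6)%nat ->
  sum_f_R0 (fun j => P x i j * eval (deriv eCas j) x) 5 = 0.
Proof.
  intros HD Hi. destruct i as [|[|[|[|[|[|i]]]]]]; try lia; rational_identity HD.
Qed.

Lemma pd_bracket g h x l : Ck Dom 2 g -> Ck Dom 2 h -> Dom x -> (l < 6)%nat ->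
  pd l (bracket P g h) x =
  bracket_pd (P x) (dPi x) (grad g x) (grad h x) (hess g x) (hess h x) l.
Proof.
  intros Hg Hh Hx Hl. apply pd_unique.
  eapply derivable_pt_lim_eq.
  - apply derivable_pt_lim_sum_f_R0. intros i Hi.
    apply derivable_pt_lim_sum_f_R0. intros j Hj.
    apply derivable_pt_lim_mult3.
    + apply pd_spec. apply (Ck2_inv Dom g i l Hg); [lia | exact Hl | exact Hx].
    + apply (derivable_pt_lim_ext (fun t => eval (ePi i j) (upd x l t))).
      * intro t. symmetry. apply Pi_eval.
      * apply derivable_pt_lim_eval, defined_ePi, Hx.
    + apply pd_spec. apply (Ck2_inv Dom h j l Hh); [lia | exact Hl | exact Hx].
  - cbv beta. rewrite upd_id. unfold bracket_pd, qform. rewrite <- !sum6_plus.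
    apply sum6_ext. intros i _. rewrite <- !sum6_plus. apply sum6_ext. intros j _.
    unfold grad, hess, dPi, P. rewrite Pi_eval. ring.
Qed.

Lemma Pi_Poisson : Poisson_on Dom P.
Proof.
  intros f g h Hf Hg Hh x Hx.
  assert (Hbb : forall u v w, smooth_on Dom v -> smooth_on Dom w ->
    bracket P u (bracket P v w) x =
    qform (P x) (grad u x)
      (bracket_pd (P x) (dPi x) (grad v x) (grad w x) (hess v x) (hess w x))).
  { intros u v w Hv Hw. apply sum6_ext. intros k _. apply sum6_ext. intros l Hl.
    unfold grad at 2. now rewrite pd_bracket by auto. }
  rewrite !Hbb by assumption.
  apply jacobi_algebraic.
  - now apply jacobiator_Pi.
  - intros. apply Pi_skew.
  - apply (hess_symm Dom); [exact Dom_open | apply Hf | exact Hx].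
  - apply (hess_symm Dom); [exact Dom_open | apply Hg | exact Hx].
  - apply (hess_symm Dom); [exact Dom_open | apply Hh | exact Hx].
Qed.

Lemma Cas_Casimir : Casimir_on Dom P (Cas c N n n1 n2).
Proof.
  replace (Cas c N n n1 n2) with (eval (eCas))
    by (apply functional_extensionality; intro x; symmetry; apply Cas_eval).
  split.
  - intro k. apply Ck_eval; [exact Dom_open | apply defined_eCas].
  - intros x Hx i Hi. rewrite <- (Pi_grad_Cas x i Hx Hi).
    apply sum_eq. intros j _. now rewrite pd_eval by now apply defined_eCas.
Qed.

End RigidBody.

Theorem mainTheorem9 (c N n n1 n2 : R) :
  Poisson_on Dom (Pi (mu1 c N n n1 n2) (mu2 c N n n1 n2) (mu3 c N n n1 n2)) /\
  Casimir_on Dom (Pi (mu1 c N n n1 n2) (mu2 c N n n1 n2) (mu3 c N n n1 n2))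
    (Cas c N n n1 n2).
Proof. split; [apply Pi_Poisson | apply Cas_Casimir]. Qed.
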